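(* The Baxter monoid $\mathrm{baxt}_\infty$ satisfies the identities $$ysxt\,xy\,hxky \approx ysxt\,yx\,hxky \quad\text{and}\quad xsyt\,xy\,hxky \approx xsyt\,yx\,hxky.$$
   Context: Let $\mathcal{A}=\{1<2<3<\cdots\}$. Right strict binary search tree: labelled rooted binary tree in which each node's label is $\ge$ every label in its left subtree and $<$ every label in its right subtree; inserting $a$: if empty create node $a$, else with root label $x$ insert into right subtree if $a>x$, left subtree otherwise. $\mathrm{P}_{\mathrm{sylv}}(w_1\cdots w_k)$ is obtained from the empty tree by inserting $w_k,\dots,w_1$ in this order. Left strict binary search tree: each node's label is $>$ every label in its left subtree and $\le$ every label in its right subtree; inserting $a$: if empty create node $a$, else with root label $x$ insert into left subtree if $a<x$, right subtree otherwise. $\mathrm{P}^\sharp(w_1\cdots w_k)$ is obtained from the empty tree by inserting $w_1,\dots,w_k$ in this order. Set $\mathrm{P}_{\mathrm{baxt}}(w)=(\mathrm{P}^\sharp(w),\mathrm{P}_{\mathrm{sylv}}(w))$. The Baxter monoid $\mathrm{baxt}_\infty$ is $\mathcal{A}^*/{\equiv}$ with $u\equiv v\iff\mathrm{P}_{\mathrm{baxt}}(u)=\mathrm{P}_{\mathrm{baxt}}(v)$. A monoid $S$ satisfies an identity $\mathbf{u}\approx\mathbf{v}$ between words over an alphabet of letters if $\varphi(\mathbf{u})=\varphi(\mathbf{v})$ for every assignment $\varphi$ of elements of $S$ (including the identity element) to the letters. *)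

From mathcomp Require Import all_boot.
Set Implicit Arguments. Unset Strict Implicit. Unset Printing Implicit Defensive.

(* Alphabet A = {1 < 2 < 3 < ...}: letters are nat's >= 1; words are seq nat
   whose letters are all positive. *)
Definition is_word (w : seq nat) : bool := all (fun a => 0 < a) w.

Inductive tree : Type := Leaf | Node of tree & nat & tree.

Fixpoint ins_right (a : nat) (T : tree) : tree :=
  match T with
  | Leaf => Node Leaf a Leaf
  | Node l x r => if x < a then Node l x (ins_right a r) else Node (ins_right a l) x r
  end.

Fixpoint ins_left (a : nat) (T : tree) : tree :=
  match T with
  | Leaf => Node Leaf a Leaf
  | Node l x r => if a < x then Node (ins_left a l) x r else Node l x (ins_left a r)
  end.

Definition P_sylv (w : seq nat) : tree := foldr ins_right Leaf w.

Definition P_sharp (w : seq nat) : tree := foldl (fun T a => ins_left a T) Leaf w.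

Definition P_baxt (w : seq nat) : tree * tree := (P_sharp w, P_sylv w).

(* The Baxter congruence: baxt_oo = A^* / baxt_equiv. *)
Definition baxt_equiv (u v : seq nat) : Prop := P_baxt u = P_baxt v.

Inductive var : Type := vx | vy | vs | vt | vh | vk.

(* Image of a word over the variables under an assignment phi of elements of
   baxt_oo (represented by words over A; the identity element is the empty
   word) to the variables: the product phi(u_1)...phi(u_n), represented by the
   concatenation of representatives. *)
Definition subst (phi : var -> seq nat) (u : seq var) : seq nat :=
  flatten (map phi u).

Definition baxt_satisfies (u v : seq var) : Prop :=
  forall phi : var -> seq nat, (forall z, is_word (phi z)) ->
    baxt_equiv (subst phi u) (subst phi v).

(* Both trees of P_baxt are built by iterated insertion into a binary search
   tree, and two insertions commute as soon as the search paths of the two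
   letters diverge in the current tree.  They do diverge once both letters
   have been inserted before: of two distinct letters, the node of one of them
   sends the other to the side opposite to itself.  In u xy v with x and y
   occurring in both u and v, the factor xy is inserted into P_sylv after v and
   into P^# after u, so every pair of its letters commutes. *)

From HB Require Import structures.
From mathcomp Require Import all_boot.
Set Implicit Arguments. Unset Strict Implicit. Unset Printing Implicit Defensive.

Section InsertionBy.

Variable dir : nat -> nat -> bool.

Fixpoint ins_by (a : nat) (T : tree) : tree :=
  match T with
  | Leaf => Node Leaf a Leaf
  | Node l x r => if dir x a then Node l x (ins_by a r) else Node (ins_by a l) x r
  end.

Fixpoint diverge (a c : nat) (T : tree) : bool :=
  match T with
  | Leaf => false
  | Node l x r => (dir x a != dir x c) || diverge a c (if dir x a then r else l)
  end.

Fixpoint finds (c : nat) (T : tree) : bool :=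
  match T with
  | Leaf => false
  | Node l x r => (x == c) || finds c (if dir x c then r else l)
  end.

Lemma ins_by_comm_diverge a c T :
  diverge a c T -> ins_by a (ins_by c T) = ins_by c (ins_by a T).
Proof.
elim: T => //= l IHl x r IHr.
by case ha: (dir x a); case hc: (dir x c) => //= h; rewrite /= ?ha ?hc ?IHl ?IHr.
Qed.

Lemma finds_ins_by b c T : finds c T -> finds c (ins_by b T).
Proof.
elim: T => //= l IHl x r IHr.
case hb: (dir x b); case hc: (dir x c) => /= /orP[-> // | fc]; rewrite hc.
all: by apply/orP; right; auto.
Qed.

Lemma finds_ins_by_self c T : finds c (ins_by c T).
Proof.
elim: T => /= [|l IHl x r IHr]; first by rewrite eqxx.
by case: ifP => h /=; rewrite h ?IHl ?IHr orbT.
Qed.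

Lemma diverge_finds a c T : finds c T -> dir c a != dir c c -> diverge a c T.
Proof.
elim: T => //= l IHl x r IHr /orP[/eqP-> sep | fc sep]; first by rewrite sep.
have [e|] := eqVneq (dir x a) (dir x c) => //=.
by rewrite e; case: (dir x c) fc; auto.
Qed.

Lemma diverge_sym a c T : diverge a c T = diverge c a T.
Proof.
elim: T => //= l IHl x r IHr.
by case: (dir x a); case: (dir x c); rewrite /= ?IHl ?IHr.
Qed.

Definition separating := forall a c, a != c -> (dir a c != dir a a) || (dir c a != dir c c).

Hypothesis dir_separating : separating.

Lemma ins_by_comm a c T :
  finds a T -> finds c T -> ins_by a (ins_by c T) = ins_by c (ins_by a T).
Proof.
move=> fa fc; have [-> // | ac] := eqVneq a c.
apply: ins_by_comm_diverge.
case/orP: (dir_separating ac) => sep; last exact: diverge_finds.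
by rewrite diverge_sym; apply: diverge_finds.
Qed.

Lemma finds_foldr c s T : finds c T -> finds c (foldr ins_by T s).
Proof. by move=> fc; elim: s => //= b s IH; apply: finds_ins_by. Qed.

Lemma finds_foldr_mem c s T : c \in s -> finds c (foldr ins_by T s).
Proof.
elim: s => //= b s IH; rewrite in_cons => /predU1P[-> | /IH]; first exact: finds_ins_by_self.
exact: finds_ins_by.
Qed.

Lemma foldr_ins_by_cat_cons a Y Z T : finds a T -> all (finds^~ T) Y ->
  foldr ins_by T (Y ++ a :: Z) = ins_by a (foldr ins_by T (Y ++ Z)).
Proof.
move=> fa; elim: Y => //= b Y IH /andP[fb fY].
by rewrite IH // ins_by_comm // finds_foldr.
Qed.

Lemma foldr_ins_by_catC X Y T : all (finds^~ T) (X ++ Y) ->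
  foldr ins_by T (X ++ Y) = foldr ins_by T (Y ++ X).
Proof.
elim: X => /= [|a X IH]; first by rewrite cats0.
case/andP=> fa fXY; rewrite IH // foldr_ins_by_cat_cons //.
by move: fXY; rewrite all_cat => /andP[].
Qed.

Lemma foldr_ins_by_swap P X Y Q T : {subset X ++ Y <= Q} ->
  foldr ins_by T (P ++ X ++ Y ++ Q) = foldr ins_by T (P ++ Y ++ X ++ Q).
Proof.
move=> XYQ; rewrite (catA X) (catA Y) !(foldr_cat _ _ P) (foldr_cat _ _ (X ++ Y)).
rewrite (foldr_cat _ _ (Y ++ X)) foldr_ins_by_catC //.
by apply/allP=> z /XYQ; apply: finds_foldr_mem.
Qed.

End InsertionBy.

Lemma ins_leftE a T : ins_left a T = ins_by leq a T.
Proof. by elim: T => //= l -> x r ->; rewrite ltnNge; case: leq. Qed.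

Lemma separating_ltn : separating ltn.
Proof. by move=> a c; rewrite /= !ltnn; case: ltngtP. Qed.

Lemma separating_leq : separating leq.
Proof. by move=> a c; rewrite /= !leqnn; case: ltngtP. Qed.

Lemma P_sylvE w : P_sylv w = foldr (ins_by ltn) Leaf w.
Proof. by []. Qed.

Lemma P_sharpE w : P_sharp w = foldr (ins_by leq) Leaf (rev w).
Proof.
rewrite /P_sharp -[w in LHS]revK foldl_rev.
by elim: (rev w) => //= a s ->; rewrite ins_leftE.
Qed.

Lemma baxt_equiv_swap P X Y Q : {subset X ++ Y <= P} -> {subset X ++ Y <= Q} ->
  baxt_equiv (P ++ X ++ Y ++ Q) (P ++ Y ++ X ++ Q).
Proof.
move=> XYP XYQ; congr pair; last first.
  by rewrite !P_sylvE; apply: (foldr_ins_by_swap separating_ltn).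
rewrite !P_sharpE !rev_cat -!catA; apply: (foldr_ins_by_swap separating_leq).
by move=> z; rewrite mem_cat !mem_rev orbC -mem_cat => /XYP.
Qed.

Definition var_code (v : var) : nat :=
  match v with vx => 0 | vy => 1 | vs => 2 | vt => 3 | vh => 4 | vk => 5 end.

Definition var_of_code (n : nat) : var :=
  match n with 0 => vx | 1 => vy | 2 => vs | 3 => vt | 4 => vh | _ => vk end.

Lemma var_codeK : cancel var_code var_of_code.
Proof. by case. Qed.

HB.instance Definition _ := Equality.copy var (can_type var_codeK).

Lemma baxt_satisfies_swap p q x y : x \in p -> y \in p -> x \in q -> y \in q ->
  baxt_satisfies (p ++ x :: y :: q) (p ++ y :: x :: q).
Proof.
move=> xp yp xq yq phi _; rewrite /subst !map_cat !flatten_cat /=.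
have occurs z r : z \in r -> {subset phi z <= flatten (map phi r)}.
  by move=> zr a az; apply/flatten_mapP; exists z.
by apply: baxt_equiv_swap => a; rewrite mem_cat => /orP[]; apply: occurs.
Qed.

Theorem theorem4p9 :
  baxt_satisfies [:: vy; vs; vx; vt; vx; vy; vh; vx; vk; vy]
                 [:: vy; vs; vx; vt; vy; vx; vh; vx; vk; vy] /\
  baxt_satisfies [:: vx; vs; vy; vt; vx; vy; vh; vx; vk; vy]
                 [:: vx; vs; vy; vt; vy; vx; vh; vx; vk; vy].
Proof.
split.
  exact: (@baxt_satisfies_swap [:: vy; vs; vx; vt] [:: vh; vx; vk; vy]).
exact: (@baxt_satisfies_swap [:: vx; vs; vy; vt] [:: vh; vx; vk; vy]).
Qed.
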